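(* Let $\mathbf{A}$ be a $(K_1,F_1,Z_1,S_1)$ PDA and $\mathbf{B}$ a $(K_2,F_2,Z_2,S_2)$ PDA. Then there exist integer sets $\mathcal{S}_\mathrm{m},\mathcal{S}_1,\ldots,\mathcal{S}_{K_1}$ and a $(K_1,K_2;F_1F_2;Z_1F_2,Z_2F_1;\mathcal{S}_\mathrm{m},\mathcal{S}_1,\ldots,\mathcal{S}_{K_1})$ HPDA such that $$\Big|\bigcup_{k_1=1}^{K_1}\mathcal{S}_{k_1}\Big|-|\mathcal{S}_\mathrm{m}|=S_1S_2,\qquad |\mathcal{S}_{k_1}|=F_1S_2\ \text{ for all }k_1\in[K_1].$$ Consequently, for every $N\ge K_1K_2$ there is an $F_1F_2$-division coded caching scheme with uncoded placement for the $(K_1,K_2;M_1,M_2;N)$ hierarchical caching system with $\frac{M_1}{N}=\frac{Z_1}{F_1}$, $\frac{M_2}{N}=\frac{Z_2}{F_2}$ and loads $$R_1=\frac{S_1S_2}{F_1F_2},\qquad R_2=\frac{S_2}{F_2}.$$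
   Context: Notation: $[a]=\{1,\ldots,a\}$. PDA. For positive integers $K,F,Z,S$ and an integer set $\mathcal{S}$ with $|\mathcal{S}|=S$, an $F\times K$ array $\mathbf{Q}=(q_{j,k})$ with entries in $\{*\}\cup\mathcal{S}$ is a $(K,F,Z,S)$ placement delivery array (PDA) (over $\mathcal{S}$; by default $\mathcal{S}=[S]$) if: (C1) the symbol $*$ appears exactly $Z$ times in each column; (C2) each integer of $\mathcal{S}$ occurs at least once in the array; (C3) for two distinct entries $q_{j_1,k_1}=q_{j_2,k_2}=s$ with $s$ an integer, we have $j_1\ne j_2$, $k_1\ne k_2$, and $q_{j_1,k_2}=q_{j_2,k_1}=*$. HPDA. Let $K_1,K_2,F,Z_1,Z_2$ be positive integers with $Z_1<F$, $Z_2<F$, and let $\mathcal{S}_\mathrm{m},\mathcal{S}_1,\ldots,\mathcal{S}_{K_1}$ be sets of integers. An $F\times(K_1+K_1K_2)$ array $\mathbf{P}=(\mathbf{P}^{(0)},\mathbf{P}^{(1)},\ldots,\mathbf{P}^{(K_1)})$, where $\mathbf{P}^{(0)}=(p^{(0)}_{j,k_1})_{j\in[F],k_1\in[K_1]}$ has every entry equal to $*$ or to ''null'' (blank), and for each $k_1\in[K_1]$, $\mathbf{P}^{(k_1)}=(p^{(k_1)}_{j,k_2})_{j\in[F],k_2\in[K_2]}$ has entries in $\{*\}\cup\mathcal{S}_{k_1}$, is a $(K_1,K_2;F;Z_1,Z_2;\mathcal{S}_\mathrm{m},\mathcal{S}_1,\ldots,\mathcal{S}_{K_1})$ hierarchical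 placement delivery array (HPDA) if: (B1) each column of $\mathbf{P}^{(0)}$ contains exactly $Z_1$ stars; (B2) for each $k_1\in[K_1]$, $\mathbf{P}^{(k_1)}$ is a $(K_2,F,Z_2,|\mathcal{S}_{k_1}|)$ PDA over $\mathcal{S}_{k_1}$; (B3) each integer $s\in\mathcal{S}_\mathrm{m}$ occurs in exactly one of the subarrays $\mathbf{P}^{(1)},\ldots,\mathbf{P}^{(K_1)}$, and whenever $p^{(k_1)}_{j,k_2}=s\in\mathcal{S}_\mathrm{m}$ we have $p^{(0)}_{j,k_1}=*$; (B4) for any $k_1\ne k_1'\in[K_1]$, $j,j'\in[F]$, $k_2,k_2'\in[K_2]$ with $p^{(k_1)}_{j,k_2}=p^{(k_1')}_{j',k_2'}$ an integer: if $p^{(k_1)}_{j',k_2}$ is an integer then $p^{(0)}_{j',k_1}=*$; and if $p^{(k_1')}_{j,k_2'}$ is an integer then $p^{(0)}_{j,k_1'}=*$. Hierarchical caching model $(K_1,K_2;M_1,M_2;N)$. A server stores $N$ independent files $W_1,\ldots,W_N$, each uniformly distributed on $B$ bits. There are $K_1$ mirror sites, each with a cache of $M_1B$ bits, and $K_1K_2$ users $U_{k_1,k_2}$ ($k_1\in[K_1]$, $k_2\in[K_2]$), each with a cache of $M_2B$ bits; user $U_{k_1,k_2}$ is attached to mirror site $k_1$. The server reaches all mirror sites through one error-free broadcast link; mirror site $k_1$ reaches its $K_2$ attached users through an error-free broadcast link. An $F$-division scheme with uncoded placement ($F\mid B$): each file $W_n$ is split into $F$ packets $W_{n,1},\ldots,W_{n,F}$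 of $B/F$ bits. In the placement phase (without knowledge of demands) mirror site $k_1$ stores a set $\mathcal{Z}_{k_1}$ of packets of total size at most $M_1B$ bits and user $U_{k_1,k_2}$ stores a set $\mathcal{Z}_{(k_1,k_2)}$ of packets of total size at most $M_2B$ bits. In the delivery phase, given a demand vector $\mathbf{d}=(d_{k_1,k_2})\in[N]^{K_1K_2}$, the server broadcasts to the mirror sites a message $X$ consisting of $S(\mathbf{d})$ packet-sized symbols, a function of the files and $\mathbf{d}$; each mirror site $k_1$ broadcasts to its attached users a message $X_{k_1}$ of $S_{k_1}(\mathbf{d})$ packet-sized symbols, a function of $X$, $\mathcal{Z}_{k_1}$ and $\mathbf{d}$; each user $U_{k_1,k_2}$ must recover $W_{d_{k_1,k_2}}$ from $X_{k_1}$, $\mathcal{Z}_{(k_1,k_2)}$ and $\mathbf{d}$. The loads are $R_1=\max_{\mathbf{d}}S(\mathbf{d})/F$ and $R_2=\max_{k_1,\mathbf{d}}S_{k_1}(\mathbf{d})/F$. *)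

From HB Require Import structures.
From mathcomp Require Import all_boot all_order all_algebra.
From mathcomp Require Import finmap.


Unset Printing Implicit Defensive.
Import Order.TTheory GRing.Theory Num.Theory.
Local Open Scope fset_scope.

(* Arrays: an F x K array Q with entries in {*} u S is a function
   Q : 'I_F -> 'I_K -> option int, where None encodes the star "*"
   and Some s encodes the integer s. *)

Definition is_PDA_over (K F Z : nat) (S : {fset int})
    (Q : 'I_F -> 'I_K -> option int) : Prop :=
  [/\ [/\ 0 < K, 0 < F, 0 < Z & 0 < #|` S|]%N,
      (forall j k s, Q j k = Some s -> s \in S),
      (forall k, #|[set j | Q j k == None]| = Z),
      (forall s, s \in S -> exists j k, Q j k = Some s) &
      (forall j1 j2 k1 k2 s, Q j1 k1 = Some s -> Q j2 k2 = Some s ->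
         (j1, k1) <> (j2, k2) ->
         [/\ j1 <> j2, k1 <> k2, Q j1 k2 = None & Q j2 k1 = None])].

Definition int_range (S : nat) : {fset int} := [fset Posz i | i in iota 1 S].

Definition is_PDA (K F Z S : nat) (Q : 'I_F -> 'I_K -> option int) : Prop :=
  is_PDA_over K F Z (int_range S) Q.

(* (K1,K2;F;Z1,Z2;Sm,S_1,...,S_K1) HPDA.
   P0 j k1 = true encodes "*" and false encodes "null" in the subarray P^(0);
   P k1 is the subarray P^(k1). *)
Definition is_HPDA (K1 K2 F Z1 Z2 : nat) (Sm : {fset int})
    (Ss : 'I_K1 -> {fset int}) (P0 : 'I_F -> 'I_K1 -> bool)
    (P : 'I_K1 -> 'I_F -> 'I_K2 -> option int) : Prop :=
  [/\ [/\ 0 < K1, 0 < K2, 0 < F, 0 < Z1 & 0 < Z2]%N,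
      (Z1 < F /\ Z2 < F)%N,
      (forall k1, #|[set j | P0 j k1]| = Z1),
      (forall k1, is_PDA_over K2 F Z2 (Ss k1) (P k1)) &
      [/\
          (forall s, s \in Sm -> exists! k1, exists j k2, P k1 j k2 = Some s),
          (forall k1 j k2 s, P k1 j k2 = Some s -> s \in Sm -> P0 j k1) &
          (forall k1 k1' j j' k2 k2' s, k1 <> k1' ->
             P k1 j k2 = Some s -> P k1' j' k2' = Some s ->
             (P k1 j' k2 <> None -> P0 j' k1) /\
             (P k1' j k2' <> None -> P0 j k1'))]].

(* A file has B = F * L bits, split into F packets of
   L bits. *)

Definition packet (L : nat) := {ffun 'I_L -> bool}.
Definition library (N F L : nat) := 'I_N -> 'I_F -> packet L.
Definition demand (K1 K2 N : nat) := {ffun 'I_K1 * 'I_K2 -> 'I_N}.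

Definition restrict (N F L : nat) (C : {set 'I_N * 'I_F}) (W : library N F L)
  : 'I_N -> 'I_F -> option (packet L) :=
  fun n f => if (n, f) \in C then Some (W n f) else None.

Arguments restrict {N F L} C W.

Section Scheme.
Variables (K1 K2 N F L : nat).

Record hier_scheme := HierScheme {
  mirror_cache : 'I_K1 -> {set 'I_N * 'I_F};
  user_cache : 'I_K1 -> 'I_K2 -> {set 'I_N * 'I_F};
  server_len : demand K1 K2 N -> nat;
  mirror_len : demand K1 K2 N -> 'I_K1 -> nat;
  server_msg : demand K1 K2 N -> library N F L -> seq (packet L);
  mirror_msg : demand K1 K2 N -> 'I_K1 -> seq (packet L) ->
               ('I_N -> 'I_F -> option (packet L)) -> seq (packet L);
  user_dec : demand K1 K2 N -> 'I_K1 -> 'I_K2 -> seq (packet L) ->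
             ('I_N -> 'I_F -> option (packet L)) -> 'I_F -> packet L }.

Definition mirror_out (sch : hier_scheme) d k1 (W : library N F L) :=
  mirror_msg sch d k1 (server_msg sch d W) (restrict (mirror_cache sch k1) W).

(* validity of a scheme for memory sizes M1, M2 (in units of files) *)
Definition valid_scheme (M1 M2 : rat) (sch : hier_scheme) : Prop :=
  [/\
      (forall k1, ((#|mirror_cache sch k1| * L)%:R <= M1 * (F * L)%:R)%R),
      (forall k1 k2, ((#|user_cache sch k1 k2| * L)%:R <= M2 * (F * L)%:R)%R),
      (forall d W, size (server_msg sch d W) = server_len sch d),
      (forall d k1 W, size (mirror_out sch d k1 W) = mirror_len sch d k1) &
      (forall d k1 k2 W f,
         user_dec sch d k1 k2 (mirror_out sch d k1 W)
                  (restrict (user_cache sch k1 k2) W) f = W (d (k1, k2)) f)].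

Definition load1 (sch : hier_scheme) : rat :=
  ((\max_(d : demand K1 K2 N) server_len sch d)%:R / F%:R)%R.
Definition load2 (sch : hier_scheme) : rat :=
  ((\max_(d : demand K1 K2 N) \max_(k1 < K1) mirror_len sch d k1)%:R / F%:R)%R.

End Scheme.

Arguments mirror_cache {K1 K2 N F L}.
Arguments user_cache {K1 K2 N F L}.
Arguments server_len {K1 K2 N F L}.
Arguments mirror_len {K1 K2 N F L}.
Arguments server_msg {K1 K2 N F L}.
Arguments mirror_msg {K1 K2 N F L}.
Arguments user_dec {K1 K2 N F L}.
Arguments mirror_out {K1 K2 N F L}.
Arguments valid_scheme {K1 K2 N F L}.
Arguments load1 {K1 K2 N F L}.
Arguments load2 {K1 K2 N F L}.

(* An HPDA yields a hierarchical scheme directly: mirror k1 caches the rows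
   starred in column k1 of P0 and user (k1,k2) the rows starred in column k2
   of P^(k1).  For each integer s outside Sm the server sends the sum of the
   packets requested at the cells labelled s; mirror k1 forwards, for each s of
   its subarray, that sum minus the terms of the other mirrors whose rows it
   caches (for s in Sm, by (B3), it computes the sum from its cache alone).  By
   (C3) and (B4), every term left besides a user's own packet lies in a row that
   user caches.
   For PDAs A and B, the HPDA has the pairs (j1,j2) as rows, P0 repeats the
   stars of A along the rows of B, and subarray k1 carries at ((j1,j2),k2) the
   integer (s1,s2) when A(j1,k1) = s1 and B(j2,k2) = s2, and a fresh integer
   of Sm determined by (k1,j1,s2) when A(j1,k1) is a star.  The S1 S2 pairs are
   the server transmissions and each subarray uses F1 S2 integers. *)

From HB Require Import structures.
From mathcomp Require Import all_boot all_order all_algebra.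
From mathcomp Require Import finmap.
Set Implicit Arguments.
Unset Strict Implicit.
Import GRing.Theory Num.Theory.
Local Open Scope fset_scope.

Lemma nth_index_map (T : eqType) (R : Type) (x0 : R) (f : T -> R) (s : seq T) x :
  x \in s -> nth x0 (map f s) (index x s) = f x.
Proof. by move=> sx; rewrite (nth_map x) ?index_mem // nth_index. Qed.

Lemma bigmax_const (T : finType) (c : nat) : 0 < #|T| -> \max_(i : T) c = c.
Proof.
case/card_gt0P=> i0 _; apply/eqP.
by rewrite eqn_leq (@leq_bigmax T (fun=> c) i0) andbT; apply/bigmax_leqP.
Qed.

Lemma natrM_div_mul (n F L : nat) : 0 < F ->
  ((n * L)%:R = n%:R / F%:R * (F * L)%:R :> rat)%R.
Proof. by move=> F_gt0; rewrite !natrM mulrA divfK // pnatr_eq0 -lt0n. Qed.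

Lemma natr_divMr (n m c : nat) : 0 < c ->
  ((n * c)%:R / (m * c)%:R = n%:R / m%:R :> rat)%R.
Proof. by move=> c_gt0; rewrite !natrM -mulf_div divff ?mulr1 // pnatr_eq0 -lt0n. Qed.

Lemma card_setX_fst (T U : finType) (p : pred T) :
  #|[set x : T * U | p x.1]| = #|[set t | p t]| * #|U|.
Proof. by rewrite -cardsT -cardsX; apply: eq_card => -[t u]; rewrite !inE andbT. Qed.

Lemma card_setX_snd (T U : finType) (p : pred U) :
  #|[set x : T * U | p x.2]| = #|T| * #|[set u | p u]|.
Proof. by rewrite -cardsT -cardsX; apply: eq_card => -[t u]; rewrite !inE. Qed.

Definition mxvec_unindex {m n} (k : 'I_(m * n)) : 'I_m * 'I_n :=
  enum_val (cast_ord (esym (mxvec_cast m n)) k).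

Lemma mxvec_unindexK m n (i : 'I_m) (j : 'I_n) : mxvec_unindex (mxvec_index i j) = (i, j).
Proof. by rewrite /mxvec_unindex /mxvec_index cast_ordK enum_rankK. Qed.

Lemma card_mxvec_unindex {m n} (p : pred ('I_m * 'I_n)) :
  #|[set k | p (mxvec_unindex k)]| = #|[set x | p x]|.
Proof.
have bij_unindex : bijective (@mxvec_unindex m n).
  exists (uncurry (@mxvec_index m n)) => [k | [i j]]; last by rewrite /= mxvec_unindexK.
  by case/mxvec_indexP: k => i j; rewrite mxvec_unindexK.
rewrite -(on_card_preimset (f := mxvec_unindex) (R := mem [set x | p x])).
  by apply: eq_card => k; rewrite !inE.
by apply: onW_bij.
Qed.

Lemma card_mxvec_fst {m n} (p : pred 'I_m) :
  #|[set k : 'I_(m * n) | p (mxvec_unindex k).1]| = #|[set i | p i]| * n.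
Proof. by rewrite (card_mxvec_unindex (fun x : 'I_m * 'I_n => p x.1)) card_setX_fst card_ord. Qed.

Lemma card_mxvec_snd {m n} (p : pred 'I_n) :
  #|[set k : 'I_(m * n) | p (mxvec_unindex k).2]| = m * #|[set j | p j]|.
Proof. by rewrite (card_mxvec_unindex (fun x : 'I_m * 'I_n => p x.2)) card_setX_snd card_ord. Qed.

Lemma card_int_range S : #|` int_range S| = S.
Proof.
rewrite card_imfset; first by rewrite /= undup_id ?iota_uniq // size_iota.
by move=> x y [].
Qed.

Definition int_of_ord {n} (i : 'I_n) : int := Posz i.+1.

Lemma int_of_ord_inj n : injective (@int_of_ord n).
Proof. by move=> i i' [/val_inj]. Qed.

Lemma mem_int_range_ord {S} (i : 'I_S) : int_of_ord i \in int_range S.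
Proof. by apply/imfsetP; exists i.+1 => //=; rewrite mem_iota !ltnS ltn_ord. Qed.

Lemma int_range_ordP {S s} : s \in int_range S -> exists i : 'I_S, s = int_of_ord i.
Proof.
case/imfsetP=> -[|i] /=; rewrite mem_iota // => /andP[_]; rewrite add1n ltnS => lt_iS ->.
by exists (Ordinal lt_iS).
Qed.

Lemma PDA_stars_lt {K F Z S Q} : @is_PDA_over K F Z S Q -> Z < F.
Proof.
case=> [[_ _ _ S_gt0] _ stars occurs _].
move: S_gt0; rewrite cardfs_gt0 => /fset0Pn[s /occurs[j [k Qjk]]].
have: [set j' | Q j' k == None] \proper [set: 'I_F].
  by apply/properP; split; [exact: subsetT | exists j; rewrite // inE Qjk].
by move/proper_card; rewrite stars cardsT card_ord.
Qed.

Lemma PDA_col_inj {K F Z S Q} : @is_PDA_over K F Z S Q ->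
  forall j j' k s, Q j k = Some s -> Q j' k = Some s -> j = j'.
Proof.
case=> _ _ _ _ C3 j j' k s Qjk Qj'k; apply: contra_eq (erefl k) => /eqP neq_jj'.
by case: (C3 _ _ _ _ _ Qjk Qj'k) => // -[/neq_jj'].
Qed.

Section HPDAScheme.
Variables (K1 K2 F Z1 Z2 : nat) (Sm : {fset int}) (Ss : 'I_K1 -> {fset int})
  (P0 : 'I_F -> 'I_K1 -> bool) (P : 'I_K1 -> 'I_F -> 'I_K2 -> option int).
Hypothesis hP : is_HPDA K1 K2 F Z1 Z2 Sm Ss P0 P.
Variables N L : nat.

Local Open Scope ring_scope.
Local Notation cell := ('I_K1 * 'I_F * 'I_K2)%type.
Local Notation cache := ('I_N -> 'I_F -> option (packet L)).
Local Notation U := (\bigcup_(k1 <- enum 'I_K1) Ss k1).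

Definition occurs s (t : cell) := P t.1.1 t.1.2 t.2 == Some s.

Definition requested (W : library N F L) (d : demand K1 K2 N) (t : cell) : packet L :=
  W (d (t.1.1, t.2)) t.1.2.

Definition cached (C : cache) (d : demand K1 K2 N) (t : cell) : packet L :=
  odflt 0 (C (d (t.1.1, t.2)) t.1.2).

Definition left_to_users k1 (t : cell) := (t.1.1 == k1) || ~~ P0 t.1.2 k1.

Definition lookup {T : eqType} (keys : seq T) (X : seq (packet L)) (x : T) : packet L :=
  nth 0 X (index x keys).

Definition hpda_server_msg d W : seq (packet L) :=
  [seq \sum_(t | occurs s t) requested W d t | s <- enum_fset (U `\` Sm)].

Definition mirror_sum d k1 X (C : cache) s : packet L :=
  if s \in Sm then \sum_(t | occurs s t) cached C d t
  else lookup (enum_fset (U `\` Sm)) X s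
       - \sum_(t | occurs s t && ~~ left_to_users k1 t) cached C d t.

Definition hpda_mirror_msg d k1 X (C : cache) : seq (packet L) :=
  map (mirror_sum d k1 X C) (enum_fset (Ss k1)).

Definition hpda_decode d k1 k2 Y (C : cache) j : packet L :=
  if P k1 j k2 is Some s then
    lookup (enum_fset (Ss k1)) Y s
    - \sum_(t | occurs s t && left_to_users k1 t && (t != (k1, j, k2))) cached C d t
  else odflt 0 (C (d (k1, k2)) j).

Definition mirror_cache_set k1 : {set 'I_N * 'I_F} := [set x | P0 x.2 k1].

Definition user_cache_set k1 k2 : {set 'I_N * 'I_F} := [set x | P k1 x.2 k2 == None].

Definition hpda_scheme : hier_scheme K1 K2 N F L :=
  @HierScheme K1 K2 N F L mirror_cache_set user_cache_set
    (fun=> #|` U `\` Sm|) (fun _ k1 => #|` Ss k1|)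
    hpda_server_msg hpda_mirror_msg hpda_decode.

Lemma cached_restrict (C : {set 'I_N * 'I_F}) W (d : demand K1 K2 N) (t : cell) :
  (d (t.1.1, t.2), t.1.2) \in C -> cached (restrict C W) d t = requested W d t.
Proof. by rewrite /cached /restrict => ->. Qed.

Lemma occurs_mem {s t} : occurs s t -> s \in Ss t.1.1.
Proof.
have [_ _ _ PDA_P _] := hP; have [_ range _ _ _] := PDA_P t.1.1.
by move/eqP; apply: range.
Qed.

Lemma mem_Ss_occurs k1 s : s \in Ss k1 -> exists j k2, occurs s (k1, j, k2).
Proof.
have [_ _ _ PDA_P _] := hP; have [_ _ _ occ _] := PDA_P k1.
by case/occ=> j [k2 Pj]; exists j, k2; apply/eqP.
Qed.

Lemma Ss_sub_U k1 : Ss k1 `<=` U.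
Proof. by apply: bigfcup_sup; rewrite ?mem_enum. Qed.

Lemma occurs_Sm {k1 s t} :
  s \in Sm -> s \in Ss k1 -> occurs s t -> t.1.1 = k1 /\ P0 t.1.2 k1.
Proof.
have [_ _ _ _ [unique_sub mirror_star _]] := hP.
move=> sSm /mem_Ss_occurs[j [k2 occ]] /eqP Pt.
have [k1' [_ k1'_uniq]] := unique_sub s sSm.
have eq_k1 : t.1.1 = k1.
  by rewrite -(k1'_uniq t.1.1) ?(k1'_uniq k1) //; [exists j, k2; apply/eqP | exists t.1.2, t.2].
by split=> //; rewrite -eq_k1; apply: mirror_star Pt sSm.
Qed.

Lemma user_knows_others {k1 j k2 s t} :
  P k1 j k2 = Some s -> occurs s t -> left_to_users k1 t -> t != (k1, j, k2) ->
  P k1 t.1.2 k2 = None.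
Proof.
have [_ _ _ PDA_P [_ _ B4]] := hP.
case: t => -[k1' j'] k2' Pj /eqP Pt; rewrite /left_to_users /= in Pt *.
have [eq_k1 _ neq_t | neq_k1 /= nP0 _] := eqVneq k1' k1.
  subst k1'; have [_ _ _ _ C3] := PDA_P k1.
  have neq : (j', k2') <> (j, k2) by move=> [ej ek]; rewrite ej ek eqxx in neq_t.
  by have [_ _ -> _] := C3 _ _ _ _ _ Pt Pj neq.
have neq : k1 <> k1' by apply/nesym/eqP.
have [P0_of_P _] := B4 _ _ _ _ _ _ _ neq Pj Pt.
by move: nP0; case: (P k1 j' k2) P0_of_P => // s' ->.
Qed.

Lemma mirror_sumE d k1 W s : s \in Ss k1 ->
  mirror_sum d k1 (hpda_server_msg d W) (restrict (mirror_cache_set k1) W) s =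
  \sum_(t | occurs s t && left_to_users k1 t) requested W d t.
Proof.
move=> sSs; rewrite /mirror_sum; case: ifP => [sSm | sNSm].
  apply: eq_big => [t | t occ].
    by case occ: (occurs s t); rewrite //= /left_to_users (occurs_Sm sSm sSs occ).1 eqxx.
  by apply: cached_restrict; rewrite inE; case: (occurs_Sm sSm sSs occ).
have sUSm : s \in U `\` Sm by rewrite inE sNSm (fsubsetP (Ss_sub_U k1)).
rewrite /lookup nth_index_map // (bigID (left_to_users k1)) /=.
rewrite [X in _ - X](eq_bigr (requested W d)) ?addrK // => t /andP[_].
by rewrite negb_or negbK => /andP[_ P0t]; rewrite cached_restrict // inE.
Qed.

Lemma hpda_decodeE d k1 k2 W j :
  let X := hpda_server_msg d W in
  let Y := hpda_mirror_msg d k1 X (restrict (mirror_cache_set k1) W) in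
  hpda_decode d k1 k2 Y (restrict (user_cache_set k1 k2) W) j = W (d (k1, k2)) j.
Proof.
rewrite /= /hpda_decode; case Pj: (P k1 j k2) => [s|]; last by rewrite /restrict inE Pj.
have occ_j : occurs s (k1, j, k2) by apply/eqP.
have sSs := occurs_mem occ_j.
rewrite /lookup nth_index_map // mirror_sumE // (bigD1 (k1, j, k2)) /=; last first.
  by rewrite occ_j /left_to_users eqxx.
rewrite [X in _ - X](eq_bigr (requested W d)) ?addrK // => t /andP[/andP[occ ltu] neq_t].
by rewrite cached_restrict // inE (user_knows_others Pj occ ltu neq_t).
Qed.

Lemma card_mirror_cache_set k1 : #|mirror_cache_set k1| = (N * Z1)%N.
Proof. by rewrite (@card_setX_snd _ _ (P0^~ k1)) card_ord; have [_ _ -> _ _] := hP. Qed.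

Lemma card_user_cache_set k1 k2 : #|user_cache_set k1 k2| = (N * Z2)%N.
Proof.
rewrite (@card_setX_snd _ _ (fun j => P k1 j k2 == None)) card_ord.
by have [_ _ _ PDA_P _] := hP; have [_ _ -> _ _] := PDA_P k1.
Qed.

Lemma hpda_scheme_valid :
  valid_scheme ((N * Z1)%:R / F%:R) ((N * Z2)%:R / F%:R) hpda_scheme.
Proof.
have [[_ _ F_gt0 _ _] _ _ _ _] := hP.
split=> [k1 | k1 k2 | d W | d k1 W | d k1 k2 W j] /=.
- by rewrite card_mirror_cache_set -natrM_div_mul.
- by rewrite card_user_cache_set -natrM_div_mul.
- by rewrite size_map.
- by rewrite size_map.
- exact: hpda_decodeE.
Qed.

Lemma demand_gt0 : (0 < N)%N -> (0 < #|{: demand K1 K2 N}|)%N.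
Proof. by move=> N_gt0; apply/card_gt0P; exists [ffun=> Ordinal N_gt0]. Qed.

Lemma hpda_load1 : (0 < N)%N -> load1 hpda_scheme = #|` U `\` Sm|%:R / F%:R.
Proof. by move=> N_gt0; rewrite /load1 /= bigmax_const ?demand_gt0. Qed.

Lemma hpda_load2 :
  (0 < N)%N -> load2 hpda_scheme = (\max_(k1 < K1) #|` Ss k1|)%:R / F%:R.
Proof. by move=> N_gt0; rewrite /load2 /= bigmax_const ?demand_gt0. Qed.

End HPDAScheme.

Section ProductHPDA.
Variables (K1 F1 Z1 S1 K2 F2 Z2 S2 : nat).
Variables (A : 'I_F1 -> 'I_K1 -> option int) (B : 'I_F2 -> 'I_K2 -> option int).
Hypotheses (hA : is_PDA K1 F1 Z1 S1 A) (hB : is_PDA K2 F2 Z2 S2 B).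

(* Pairs (s1, s2) are coded by nonnegative integers, the integers of Sm by
   negative ones; [choice.pickle] is qualified because finmap shadows it. *)
Definition code k1 j1 (s2 : int) : int :=
  if A j1 k1 is Some s1 then Posz (choice.pickle (s1, s2))
  else Negz (choice.pickle (k1, j1, s2)).

Definition prod_P0 (j : 'I_(F1 * F2)) k1 := A (mxvec_unindex j).1 k1 == None.

Definition prod_P k1 (j : 'I_(F1 * F2)) k2 :=
  omap (code k1 (mxvec_unindex j).1) (B (mxvec_unindex j).2 k2).

Definition prod_Ss k1 : {fset int} := [fset code k1 x.1 (int_of_ord x.2) | x : 'I_F1 * 'I_S2].

Local Notation U := (\bigcup_(k1 <- enum 'I_K1) prod_Ss k1).

Definition prod_Sm : {fset int} := [fset s in U | (s < 0)%R].

Lemma prod_PE k1 j1 j2 k2 : prod_P k1 (mxvec_index j1 j2) k2 = omap (code k1 j1) (B j2 k2).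
Proof. by rewrite /prod_P mxvec_unindexK. Qed.

Lemma code_ltz0 k1 j1 s2 : (code k1 j1 s2 < 0)%R = (A j1 k1 == None).
Proof. by rewrite /code; case: (A j1 k1). Qed.

Lemma code_eq_None {k1 k1' j1 j1' s2 s2'} : code k1 j1 s2 = code k1' j1' s2' ->
  A j1 k1 = None -> [/\ k1 = k1', j1 = j1' & s2 = s2'].
Proof.
rewrite /code => + A_j1; rewrite A_j1.
by case: (A j1' k1') => // -[/(pcan_inj choice.pickleK)[-> -> ->]].
Qed.

Lemma code_eq_Some {k1 k1' j1 j1' s1 s2 s2'} : code k1 j1 s2 = code k1' j1' s2' ->
  A j1 k1 = Some s1 -> A j1' k1' = Some s1 /\ s2 = s2'.
Proof.
rewrite /code => + A_j1; rewrite A_j1.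
by case: (A j1' k1') => // s1' [/(pcan_inj choice.pickleK)[-> ->]].
Qed.

Lemma code_inj {k1 j1 j1' s2 s2'} : code k1 j1 s2 = code k1 j1' s2' -> j1 = j1' /\ s2 = s2'.
Proof.
case A_j1: (A j1 k1) => [s1|] eq_code; last by case: (code_eq_None eq_code A_j1).
have [A_j1' ->] := code_eq_Some eq_code A_j1.
by split=> //; exact: (PDA_col_inj hA A_j1 A_j1').
Qed.

Lemma card_prod_Ss k1 : #|` prod_Ss k1| = (F1 * S2)%N.
Proof.
rewrite card_imfset /=; first by rewrite -cardE card_prod !card_ord.
by move=> [j1 i] [j1' i'] /code_inj[/= -> /int_of_ord_inj ->].
Qed.

Lemma mem_prod_Ss k1 j1 {s2} : s2 \in int_range S2 -> code k1 j1 s2 \in prod_Ss k1.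
Proof. by case/int_range_ordP=> i ->; apply/imfsetP; exists (j1, i). Qed.

Lemma prod_SsP {k1 s} :
  s \in prod_Ss k1 -> exists j1 (i : 'I_S2), s = code k1 j1 (int_of_ord i).
Proof. by case/imfsetP=> -[j1 i] _ ->; exists j1, i. Qed.

Lemma prod_P_PDA k1 : is_PDA_over K2 (F1 * F2) (Z2 * F1) (prod_Ss k1) (prod_P k1).
Proof.
have [[_ F1_gt0 _ _] _ _ _ _] := hA.
have [[K2_gt0 F2_gt0 Z2_gt0 +] B_range B_stars B_occurs B_C3] := hB.
rewrite card_int_range => S2_gt0; split.
- by rewrite card_prod_Ss !muln_gt0 K2_gt0 F1_gt0 F2_gt0 Z2_gt0 S2_gt0.
- move=> j k2 s; case/mxvec_indexP: j => j1 j2; rewrite prod_PE.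
  by case B_j2: (B j2 k2) => [s2|] // [<-]; apply/mem_prod_Ss/(B_range _ _ _ B_j2).
- move=> k2; rewrite (mulnC Z2) -(B_stars k2) -(card_mxvec_snd (fun j => B j k2 == None)).
  by apply: eq_card => j; rewrite !inE /prod_P; case: (B _ k2).
- move=> s /prod_SsP[j1 [i ->]].
  have [j2 [k2 B_j2]] := B_occurs _ (mem_int_range_ord i).
  by exists (mxvec_index j1 j2), k2; rewrite prod_PE B_j2.
- move=> j j' k2 k2' s; case/mxvec_indexP: j => j1 j2; case/mxvec_indexP: j' => j1' j2'.
  rewrite !prod_PE; case B_j2: (B j2 k2) => [s2|] //; case B_j2': (B j2' k2') => [s2'|] //.
  move=> [<-] [/code_inj[eq_j1 eq_s2]] neq; subst j1' s2'.
  have neq2 : (j2, k2) <> (j2', k2') by move=> [ej ek]; apply: neq; rewrite ej ek.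
  have [neq_j2 neq_k2 -> ->] := B_C3 _ _ _ _ _ B_j2 B_j2' neq2.
  by split=> // /(congr1 mxvec_unindex); rewrite !mxvec_unindexK => -[].
Qed.

Lemma mem_prod_U {k1 s} : s \in prod_Ss k1 -> s \in U.
Proof. by move=> sSs; apply/bigfcupP; exists k1; rewrite ?mem_enum. Qed.

Lemma prod_Sm_unique s : s \in prod_Sm -> exists! k1, exists j k2, prod_P k1 j k2 = Some s.
Proof.
rewrite inE => /andP[/bigfcupP[k1 _ sSs] s_lt0].
have [_ _ _ occurs _] := prod_P_PDA k1.
exists k1; split; first exact: occurs.
move=> k1' [j' [k2']]; case/mxvec_indexP: j' => j1' j2'; rewrite prod_PE.
case: (B j2' k2') => //= s2' [eq_s].
have [j1 [i s_code]] := prod_SsP sSs; rewrite s_code code_ltz0 in s_lt0.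
by rewrite s_code in eq_s; case: (code_eq_None (esym eq_s) (eqP s_lt0)).
Qed.

Lemma prod_Sm_star k1 j k2 s : prod_P k1 j k2 = Some s -> s \in prod_Sm -> prod_P0 j k1.
Proof.
case/mxvec_indexP: j => j1 j2; rewrite prod_PE /prod_P0 mxvec_unindexK.
by case: (B j2 k2) => //= s2 [<-]; rewrite inE => /andP[_]; rewrite code_ltz0.
Qed.

Lemma prod_P_cross k1 k1' j j' k2 k2' s : k1 <> k1' ->
  prod_P k1 j k2 = Some s -> prod_P k1' j' k2' = Some s ->
  (prod_P k1 j' k2 <> None -> prod_P0 j' k1) /\ (prod_P k1' j k2' <> None -> prod_P0 j k1').
Proof.
have [_ _ _ _ A_C3] := hA.
move=> neq_k1; case/mxvec_indexP: j => j1 j2; case/mxvec_indexP: j' => j1' j2'.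
rewrite !prod_PE /prod_P0 !mxvec_unindexK /=.
case: (B j2 k2) => [s2|] //; case: (B j2' k2') => [s2'|] // [<-] [] /esym eq_code.
case A_j1: (A j1 k1) => [s1|]; last by case: (code_eq_None eq_code A_j1).
have [A_j1' _] := code_eq_Some eq_code A_j1.
have neq : (j1, k1) <> (j1', k1') by case=> _ /neq_k1.
by have [_ _ A1 A2] := A_C3 _ _ _ _ _ A_j1 A_j1' neq; split=> _; apply/eqP.
Qed.

Lemma prod_HPDA : is_HPDA K1 K2 (F1 * F2) (Z1 * F2) (Z2 * F1) prod_Sm prod_Ss prod_P0 prod_P.
Proof.
have [[K1_gt0 F1_gt0 Z1_gt0 _] _ A_stars _ _] := hA.
have [[K2_gt0 F2_gt0 Z2_gt0 _] _ _ _ _] := hB.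
split.
- by rewrite !muln_gt0 K1_gt0 K2_gt0 F1_gt0 F2_gt0 Z1_gt0 Z2_gt0.
- by rewrite ltn_pmul2r // (mulnC Z2) ltn_pmul2l // (PDA_stars_lt hA) (PDA_stars_lt hB).
- by move=> k1; rewrite -(A_stars k1) -(card_mxvec_fst (fun j1 => A j1 k1 == None)).
- exact: prod_P_PDA.
- by split; [exact: prod_Sm_unique | exact: prod_Sm_star | exact: prod_P_cross].
Qed.

Lemma prod_U_diff_Sm :
  U `\` prod_Sm = [fset Posz (choice.pickle (int_of_ord x.1, int_of_ord x.2)) | x : 'I_S1 * 'I_S2].
Proof.
have [_ A_range _ A_occurs _] := hA.
apply/fsetP=> s; rewrite !inE; apply/idP/idP.
  case/andP=> + /bigfcupP[k1 _ sSs]; have [j1 [i ->]] := prod_SsP sSs.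
  rewrite (mem_prod_U (mem_prod_Ss k1 j1 (mem_int_range_ord i))) code_ltz0 /code /=.
  case A_j1: (A j1 k1) => [s1|] // _; have [a ->] := int_range_ordP (A_range _ _ _ A_j1).
  by apply/imfsetP; exists (a, i).
case/imfsetP=> -[a i] _ ->; have [j1 [k1 A_j1]] := A_occurs _ (mem_int_range_ord a).
have <- : code k1 j1 (int_of_ord i) = Posz (choice.pickle (int_of_ord a, int_of_ord i)).
  by rewrite /code A_j1.
by rewrite (mem_prod_U (mem_prod_Ss k1 j1 (mem_int_range_ord i))) code_ltz0 A_j1.
Qed.

Lemma card_prod_U_diff_Sm : #|` U `\` prod_Sm| = (S1 * S2)%N.
Proof.
rewrite prod_U_diff_Sm card_imfset /=; first by rewrite -cardE card_prod !card_ord.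
by move=> [a i] [a' i'] [/(pcan_inj choice.pickleK)[/val_inj-> /val_inj->]].
Qed.

Lemma card_prod_U : #|` U| = (S1 * S2 + #|` prod_Sm|)%N.
Proof.
by rewrite -(cardfsID prod_Sm U) (fsetIidPr (fset_sub _ _)) card_prod_U_diff_Sm addnC.
Qed.

End ProductHPDA.

Unset Implicit Arguments.

Theorem theorem3 (K1 F1 Z1 S1 K2 F2 Z2 S2 : nat)
  (A : 'I_F1 -> 'I_K1 -> option int) (B : 'I_F2 -> 'I_K2 -> option int) :
  is_PDA K1 F1 Z1 S1 A -> is_PDA K2 F2 Z2 S2 B ->
  (exists (Sm : {fset int}) (Ss : 'I_K1 -> {fset int})
          (P0 : 'I_(F1 * F2) -> 'I_K1 -> bool)
          (P : 'I_K1 -> 'I_(F1 * F2) -> 'I_K2 -> option int),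
     [/\ is_HPDA K1 K2 (F1 * F2) (Z1 * F2) (Z2 * F1) Sm Ss P0 P,
         #|` \bigcup_(k1 <- enum 'I_K1) Ss k1| = (S1 * S2 + #|` Sm|)%N &
         forall k1, #|` Ss k1| = (F1 * S2)%N])
  /\
  (forall N : nat, (K1 * K2 <= N)%N -> forall L : nat, (0 < L)%N ->
     exists sch : hier_scheme K1 K2 N (F1 * F2) L,
       [/\ valid_scheme ((N * Z1)%:R / F1%:R) ((N * Z2)%:R / F2%:R) sch,
           load1 sch = ((S1 * S2)%:R / (F1 * F2)%:R)%R &
           load2 sch = (S2%:R / F2%:R)%R]).
Proof.
move=> hA hB; have hP := prod_HPDA hA hB.
split.
  exists (prod_Sm S2 A), (prod_Ss S2 A), (prod_P0 A), (prod_P A B).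
  by split=> //; [exact: (card_prod_U S2 hA) | exact: (card_prod_Ss S2 hA)].
have [[K1_gt0 F1_gt0 _ _] _ _ _ _] := hA; have [[K2_gt0 F2_gt0 _ _] _ _ _ _] := hB.
move=> N le_K_N L _; have N_gt0 : (0 < N)%N by apply: leq_trans le_K_N; rewrite muln_gt0 K1_gt0.
exists (hpda_scheme (prod_Sm S2 A) (prod_Ss S2 A) (prod_P0 A) (prod_P A B) N L); split.
- rewrite -(natr_divMr (N * Z1) F1 F2_gt0) -(natr_divMr (N * Z2) F2 F1_gt0) -!mulnA.
  by rewrite (mulnC F2); apply: hpda_scheme_valid.
- by rewrite hpda_load1 // (card_prod_U_diff_Sm S2 hA).
- rewrite hpda_load2 // (eq_bigr _ (fun k1 _ => card_prod_Ss S2 hA k1)) bigmax_const ?card_ord //.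
  by rewrite (mulnC F1 S2) (mulnC F1 F2) natr_divMr.
Qed.
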